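(* Let $\beta:\mathbb R\to\mathbb R$ be piecewise continuous with $\beta(-t)^2=\beta(t)^2$ for all $t$, let $\Lambda(t)=\begin{pmatrix}0&1\\-\beta(t)^2&0\end{pmatrix}$, let $b(t,s)$ solve $\frac{\partial}{\partial t}b(t,s)=\Lambda(t)b(t,s)$, $b(s,s)=\mathbb 1$, and set $b(t)=b(t,-t)$ with entries $b_{ij}(t)$. If $|\mathrm{Tr}\,b(t)|>2$ for some $t\ge0$, then $b_{12}(t)\neq0$ and $b_{21}(t)\neq0$. *)

From HB Require Import structures.
From mathcomp Require Import all_boot all_order all_algebra.
From mathcomp Require Import all_classical all_reals all_analysis.
Set Implicit Arguments. Unset Strict Implicit. Unset Printing Implicit Defensive.
Import Order.TTheory GRing.Theory Num.Theory.
Import numFieldNormedType.Exports.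
Local Open Scope classical_set_scope.
Local Open Scope ring_scope.

Definition piecewise_continuous {R : realType} (f : R -> R) : Prop :=
  forall a c : R, a <= c ->
    exists s : seq R,
      (forall x, a <= x <= c -> x \notin s -> {for x, continuous f}) /\
      (forall x, x \in s ->
         (exists l : R, f y @[y --> x^'-] --> l) /\
         (exists l : R, f y @[y --> x^'+] --> l)).

Definition Lambda {R : realType} (beta : R -> R) (t : R) : 'M[R]_2 :=
  \matrix_(i < 2, j < 2)
    (if i == 0 :> nat then (if j == 0 :> nat then 0 else 1)
     else (if j == 0 :> nat then - (beta t ^+ 2) else 0)).

(* b is the propagator of  d/dt b(t,s) = Lambda(t) b(t,s),  b(s,s) = 1.
   Since beta is only piecewise continuous, the solution is continuous in t
   everywhere and satisfies the ODE at every t where beta is continuous. *)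
Definition is_propagator {R : realType} (beta : R -> R) (b : R -> R -> 'M[R]_2) : Prop :=
  forall s : R,
    b s s = 1%:M /\
    (forall t : R, {for t, continuous (fun u => b u s)}) /\
    (forall t : R, {for t, continuous beta} ->
       is_derive t 1 (fun u => b u s) (Lambda beta t *m b t s)).

(* Each column (p, q) of b(., s) solves the Hill equation p' = q, q' = -beta^2 p,
   so the Wronskian of two columns is constant in time; since beta^2 is even,
   u |-> (p(-u), -q(-u)) is a solution too.  Evaluating these Wronskians at -t
   and t, where b(t,t) = b(-t,-t) = 1, shows that b(-t,t) is the adjugate of
   M = b(t,-t) and then that M11^2 - M12 M21 = M22^2 - M12 M21 = 1.  If
   M12 M21 = 0, both diagonal entries are +-1 and |Tr M| <= 2. *)

From mathcomp Require Import all_boot all_order all_algebra.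
From mathcomp Require Import all_classical all_reals all_analysis.
From mathcomp Require Import ring lra.
Set Implicit Arguments. Unset Strict Implicit. Unset Printing Implicit Defensive.

Import Order.TTheory GRing.Theory Num.Theory.
Import numFieldNormedType.Exports.
Local Open Scope ring_scope.

Lemma is_derive_mx_coord {R : realFieldType} {V : normedModType R} {m n : nat}
    (M : V -> 'M[R]_(m, n)) (x v : V) (dM : 'M[R]_(m, n)) i j :
  is_derive x v M dM -> is_derive x v (fun u => M u i j) (dM i j).
Proof.
move=> [dMx <-]; apply: DeriveDef; first by move/derivable_mxP: dMx.
by rewrite derive_mx // mxE.
Qed.

Lemma continuous_mx_coord {R : realFieldType} {T : topologicalType} {m n : nat}
    (M : T -> 'M[R]_(m, n)) i j :
  continuous M -> continuous (fun u => M u i j).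
Proof.
by move=> cM u; exact: continuous_comp (cM u) (@coord_continuous _ m n i j (M u)).
Qed.

Lemma is_derive1_compN {R : realType} (f : R -> R) (x df : R) :
  is_derive (- x) 1 f df -> is_derive x 1 (fun u => f (- u)) (- df).
Proof.
move=> fx; have := is_derive1_comp fx (is_deriveNid x 1).
by rewrite mulrN1.
Qed.

Lemma derive0_cofinite_eq {R : realType} (f : R -> R) (s : seq R) (a c : R) :
  continuous f -> a <= c ->
  (forall x, a < x < c -> x \notin s -> is_derive x 1 f 0) -> f a = f c.
Proof.
move=> cf; elim: s a c => [|y s IH] a c ac f'0.
  have [z _] : exists2 z, z \in `[a, c] & f c - f a = (fun=> 0) z * (c - a).
    apply: MVT_segment => //; last exact: continuous_subspaceT.
    by move=> x; rewrite in_itv /= => xac; apply: f'0.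
  by rewrite mul0r => /eqP; rewrite subr_eq0 => /eqP.
have notin_cons x : x != y -> x \notin s -> x \notin y :: s.
  by move=> xy xs; rewrite inE negb_or xy.
have [/andP[ay yc]|yac] := boolP (a < y < c).
  have -> : f a = f y.
    apply: IH (ltW ay) _ => x /andP[ax xy] xs.
    by apply: f'0; [rewrite ax (lt_trans xy yc)|rewrite notin_cons ?lt_eqF].
  apply: IH (ltW yc) _ => x /andP[yx xc] xs.
  by apply: f'0; [rewrite xc (lt_trans ay yx)|rewrite notin_cons ?gt_eqF].
apply: IH ac _ => x xac xs; apply: f'0 => //; apply: notin_cons => //.
by apply: contraNneq yac => <-.
Qed.

Section HillEquation.
Variables (R : realType) (k : R -> R) (regular : R -> Prop).
Hypothesis regular_cofinite : forall a c : R, a <= c ->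
  exists s : seq R, forall x, a < x < c -> x \notin s -> regular x.

(* The ODE is only required at the [regular] points, which are cofinite on
   every bounded interval; continuity carries the argument across the others. *)
Definition hill_solution (p q : R -> R) : Prop :=
  [/\ continuous p, continuous q &
      forall x, regular x ->
        is_derive x 1 p (q x) /\ is_derive x 1 q (- (k x * p x))].

Lemma hill_wronskian_cst (p q r w : R -> R) (a c : R) :
  hill_solution p q -> hill_solution r w ->
  p a * w a - q a * r a = p c * w c - q c * r c.
Proof.
move=> [cp cq pq'] [cr cw rw'].
wlog ac : a c / a <= c.
  by move=> Wac; case: (leP a c) => [/Wac //|/ltW/Wac ->].
have [s regs] := regular_cofinite ac.
have cW : continuous (p * w - q * r).
  by move=> x; apply: cvgB; apply: cvgM; [exact: cp|exact: cw|exact: cq|exact: cr].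
have := derive0_cofinite_eq cW ac; apply=> x xac xs.
have [[dp dq] [dr dw]] := (pq' x (regs x xac xs), rw' x (regs x xac xs)).
by apply: is_derive_eq; rewrite /GRing.scale /=; ring.
Qed.

End HillEquation.

Lemma mxtrace2 {R : pzRingType} (A : 'M[R]_2) : \tr A = A 0 0 + A 1 1.
Proof.
rewrite /mxtrace !big_ord_recl big_ord0 addr0.
by rewrite (_ : lift ord0 ord0 = 1); last exact: val_inj.
Qed.

Lemma Lambda_mulmxE {R : realType} (beta : R -> R) (u : R) (B : 'M[R]_2) j :
  (Lambda beta u *m B) 0 j = B 1 j /\
  (Lambda beta u *m B) 1 j = - (beta u ^+ 2 * B 0 j).
Proof.
rewrite !mxE !big_ord_recl !big_ord0 !mxE /=.
rewrite (_ : lift ord0 ord0 = 1); last exact: val_inj.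
by rewrite !mul0r !addr0 add0r mul1r mulNr.
Qed.

Section PropagatorSymmetry.
Variables (R : realType) (beta : R -> R) (b : R -> R -> 'M[R]_2).
Hypothesis beta_pc : piecewise_continuous beta.
Hypothesis beta2_even : forall t : R, beta (- t) ^+ 2 = beta t ^+ 2.
Hypothesis b_propagator : is_propagator beta b.

Let k (u : R) := beta u ^+ 2.
Let regular (x : R) := {for x, continuous beta} /\ {for - x, continuous beta}.

Lemma beta_regular_cofinite (a c : R) : a <= c ->
  exists s : seq R, forall x, a < x < c -> x \notin s -> regular x.
Proof.
move=> ac; have [s1 [cs1 _]] := beta_pc ac.
have Nca : - c <= - a by rewrite lerN2.
have [s2 [cs2 _]] := beta_pc Nca.
exists (s1 ++ map -%R s2) => x /andP[ax xc].
rewrite mem_cat negb_or => /andP[xs1 xs2]; split; first by apply: cs1; rewrite ?ltW.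
apply: cs2; first by rewrite !lerN2 !ltW.
by apply: contra xs2 => xs; rewrite -[x]opprK map_f.
Qed.

Lemma propagator_diag (s : R) i j : b s s i j = (i == j)%:R.
Proof. by have [-> _] := b_propagator s; rewrite mxE. Qed.

Lemma propagator_column_hill (s : R) i :
  hill_solution k regular (fun u => b u s 0 i) (fun u => b u s 1 i).
Proof.
have [_ [cb db]] := b_propagator s.
split; try exact: continuous_mx_coord.
move=> x [cx _]; have [E0 E1] := Lambda_mulmxE beta x (b x s) i.
by split; rewrite /k -?E0 -?E1; apply: is_derive_mx_coord; apply: db.
Qed.

Lemma propagator_reversed_column_hill (s : R) i :
  hill_solution k regular (fun u => b (- u) s 0 i) (fun u => - b (- u) s 1 i).
Proof.
have [cp cq pq'] := propagator_column_hill s i.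
have cN (f : R -> R) : continuous f -> continuous (fun u => f (- u)).
  by move=> cf u; exact: (continuous_comp (@opp_continuous R u) (cf (- u))).
split; [exact: cN _ cp|by move=> u; apply: continuousN; exact: cN _ cq u|].
move=> x [cx cNx]; have rNx : regular (- x) by split; rewrite ?opprK.
have [dp dq] := pq' _ rNx.
split; first exact: is_derive1_compN.
apply: is_derive_eq; first exact/is_deriveN/is_derive1_compN.
by rewrite /k beta2_even opprK.
Qed.

Lemma propagator_flip_entries (t : R) :
  [/\ b (- t) t 0 0 = b t (- t) 1 1, b (- t) t 0 1 = - b t (- t) 0 1,
      b (- t) t 1 0 = - b t (- t) 1 0 & b (- t) t 1 1 = b t (- t) 0 0].
Proof.
have W i j := hill_wronskian_cst beta_regular_cofinite (- t) t
  (propagator_column_hill t i) (propagator_column_hill (- t) j).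
move: (W 0 0) (W 0 1) (W 1 0) (W 1 1); rewrite !propagator_diag /=.
rewrite !(mul0r, mulr0, mul1r, mulr1, subr0, sub0r).
by move=> /eqP; rewrite eqr_oppLR => /eqP -> -> /oppr_inj -> ->.
Qed.

Lemma propagator_diag_sq (t : R) :
  b t (- t) 0 0 ^+ 2 - b t (- t) 0 1 * b t (- t) 1 0 = 1 /\
  b t (- t) 1 1 ^+ 2 - b t (- t) 0 1 * b t (- t) 1 0 = 1.
Proof.
have W i j := hill_wronskian_cst beta_regular_cofinite (- t) t
  (propagator_reversed_column_hill t i) (propagator_column_hill (- t) j).
move: (W 0 1) (W 1 0); rewrite /= !opprK !propagator_diag /=.
have [-> -> -> ->] := propagator_flip_entries t.
rewrite !(mul0r, mulr0, mul1r, mulr1, subr0, sub0r, opprK).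
by move=> W01 W10; split; [rewrite [RHS]W10|rewrite [RHS]W01]; ring.
Qed.

End PropagatorSymmetry.

Lemma neq0_of_sqr_sub_eq1 {R : realFieldType} (x y c : R) :
  x ^+ 2 - c = 1 -> y ^+ 2 - c = 1 -> 2 < `|x + y| -> c != 0.
Proof.
rewrite -[2 < _]ltr_sqr ?nnegrE // real_normK ?num_real // => hx hy.
apply: contraTneq => c0; rewrite -leNgt.
by move: hx hy; rewrite c0 subr0 => hx hy; nra.
Qed.

Theorem mainTheorem5 (R : realType) (beta : R -> R) (b : R -> R -> 'M[R]_2)
  (hpc : piecewise_continuous beta)
  (heven : forall t : R, beta (- t) ^+ 2 = beta t ^+ 2)
  (hb : is_propagator beta b)
  (t : R) (ht : 0 <= t)
  (htr : 2 < `|\tr (b t (- t))|) :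
  b t (- t) 0 1 != 0 /\ b t (- t) 1 0 != 0.
Proof.
have [sq00 sq11] := propagator_diag_sq hpc heven hb t.
rewrite mxtrace2 in htr.
by have := neq0_of_sqr_sub_eq1 sq00 sq11 htr; rewrite mulf_eq0 negb_or => /andP.
Qed.
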